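(* Let $s<-s^{neg}$ and suppose $m\in P\cap\mathbb Z^n$ lies in a negative-definite island $U$ of $g_s$. Then the pointwise norm of $\sigma^m_s$, which is $\mathbb T^n$-invariant and hence a function of $x$, is minimized at $m$ and is strictly increasing along each ray emanating from $m$, from $m$ up to the point where the ray meets the boundary of $U$.
   Context: Let $P=\{x\in\mathbb R^n:\ell_j(x)=\langle\nu_j,x\rangle+\lambda_j\ge0,\ j=1,\dots,r\}$ be a Delzant polytope with interior $\check P$, $(X_P,\omega)$ the associated compact symplectic toric manifold with action-angle coordinates $(x,\theta)$ on $\check X_P\cong\check P\times\mathbb T^n$, $\omega=\sum dx^j\wedge d\theta_j$. $L$ is a Hermitian prequantum line bundle with unitary trivialization $\mathbbm1$ over $\check X_P$ and $\nabla\mathbbm1=-i\sum x^jd\theta_j\mathbbm1$. Let $g_P=\frac12\sum\ell_j\log\ell_j$, $\psi\in C^\infty(P)$ strongly convex (positive definite Hessian on $P$), $g_s=g_P+s\psi$ with Hessian $H_s$ and $y_s=\partial g_s/\partial x$. The polarized section $\sigma^m_s$ is given on $\check X_P$ by $\sigma^m_s=e^{m\cdot(y_s+i\theta)}e^{-(x\cdot y_s-g_s)}\mathbbm1$, so its pointwise norm is $|\sigma^m_s|=e^{(m-x)\cdot y_s+g_s}$. A negative-definite island of $g_s$ is a connected component of $\{x\in\check P:H_s(x)\text{ negative definite}\}$. $s^{cvx}\ge0$ denotes the smallest number such that $g_s$ is convex on $\check P$ for all $s>-s^{cvx}$, and $s^{neg}\ge s^{cvx}$ the smallest number such that for all $s<-s^{neg}$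 the function $g_s$ has a nonempty negative-definite island. *)

From HB Require Import structures.
From mathcomp Require Import all_boot all_order all_algebra.
From mathcomp Require Import all_classical all_reals all_analysis.
Set Implicit Arguments. Unset Strict Implicit. Unset Printing Implicit Defensive.
Import Order.TTheory GRing.Theory Num.Theory.
Import numFieldNormedType.Exports.
Local Open Scope classical_set_scope.
Local Open Scope ring_scope.

Section Toric.
Variable R : realType.
Variables n r : nat.

Definition ebasis (i : 'I_n) : 'rV[R]_n := delta_mx 0 i.

Definition intpt (m : 'I_n -> int) : 'rV[R]_n := \row_k (m k)%:~R.

Definition dotp (u v : 'rV[R]_n) : R := \sum_k u 0 k * v 0 k.

Definition ell (nu : 'I_r -> 'I_n -> int) (lam : 'I_r -> R) (j : 'I_r)
  (x : 'rV[R]_n) : R := \sum_k (nu j k)%:~R * x 0 k + lam j.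

Definition polytope nu lam : set 'rV[R]_n := [set x | forall j, 0 <= ell nu lam j x].

Definition vertex (A : set 'rV[R]_n) (x : 'rV[R]_n) : Prop :=
  A x /\ forall y z t, A y -> A z -> 0 < t < 1 -> x = t *: y + (1 - t) *: z -> y = z.

(* Delzant polytope: compact, with nonempty interior, irredundant description
   (each j defines a facet), and at each vertex exactly n facets meet whose
   normals form a Z-basis of Z^n. *)
Definition delzant nu lam : Prop :=
  let P := polytope nu lam in
  bounded_set P /\ (interior P !=set0) /\
  (forall j, exists x, P x /\ ell nu lam j x = 0 /\ forall k, k != j -> 0 < ell nu lam k x) /\
  (forall x, vertex P x ->
     exists f : 'I_n -> 'I_r, injective f /\
       (forall j, ell nu lam j x = 0 <-> exists i, f i = j) /\
       (\det (\matrix_(i, k) nu (f i) k) = 1 \/ \det (\matrix_(i, k) nu (f i) k) = -1)).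

(* iterated directional derivatives; C^oo = all of them Frechet differentiable *)
Fixpoint iterD (vs : seq 'rV[R]_n) (f : 'rV[R]_n -> R) : 'rV[R]_n -> R :=
  match vs with
  | [::] => f
  | v :: vs' => fun x => derive (iterD vs' f) x v
  end.

Definition smooth (f : 'rV[R]_n -> R) : Prop :=
  forall vs x, differentiable (iterD vs f) x.

Definition grad (f : 'rV[R]_n -> R) (x : 'rV[R]_n) : 'rV[R]_n :=
  \row_k derive f x (ebasis k).

Definition hessian (f : 'rV[R]_n -> R) (x : 'rV[R]_n) : 'M[R]_n :=
  \matrix_(i, k) derive (fun z => derive f z (ebasis k)) x (ebasis i).

Definition posdef (H : 'M[R]_n) : Prop :=
  forall v : 'rV[R]_n, v != 0 -> 0 < (v *m H *m v^T) 0 0.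
Definition negdef (H : 'M[R]_n) : Prop :=
  forall v : 'rV[R]_n, v != 0 -> (v *m H *m v^T) 0 0 < 0.

Definition gP nu lam (x : 'rV[R]_n) : R :=
  2^-1 * \sum_j ell nu lam j x * ln (ell nu lam j x).

Definition gs nu lam (psi : 'rV[R]_n -> R) (s : R) (x : 'rV[R]_n) : R :=
  gP nu lam x + s * psi x.

(* pointwise norm |sigma^m_s| = exp((m - x).y_s + g_s), as a function of x *)
Definition sigma_norm nu lam psi s (m : 'I_n -> int) (x : 'rV[R]_n) : R :=
  expR (dotp (intpt m - x) (grad (gs nu lam psi s) x) + gs nu lam psi s x).

Definition negdef_region nu lam psi s : set 'rV[R]_n :=
  [set x | interior (polytope nu lam) x /\ negdef (hessian (gs nu lam psi s) x)].

Definition island nu lam psi s (U : set 'rV[R]_n) : Prop :=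
  exists x0, negdef_region nu lam psi s x0 /\
             U = connected_component (negdef_region nu lam psi s) x0.

Definition has_island nu lam psi s : Prop :=
  exists U, island nu lam psi s U /\ U !=set0.

Definition is_sneg nu lam psi (t : R) : Prop :=
  0 <= t /\ (forall s, s < - t -> has_island nu lam psi s) /\
  (forall t', 0 <= t' -> (forall s, s < - t' -> has_island nu lam psi s) -> t <= t').

End Toric.

From HB Require Import structures.
From mathcomp Require Import all_boot all_order all_algebra.
From mathcomp Require Import all_classical all_reals all_analysis.
From mathcomp Require Import ring lra.
Import Order.TTheory GRing.Theory Num.Theory.
Import numFieldNormedType.Exports.
Local Open Scope classical_set_scope.
Local Open Scope ring_scope.
Set Implicit Arguments. Unset Strict Implicit. Unset Printing Implicit Defensive.

(* On the interior of P the pointwise norm is exp L with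
   L(x) = <m - x, grad g_s(x)> + g_s(x).  In the derivative of L the gradient
   terms cancel, leaving D_v L(x) = v H_s(x) (m - x)^T; on the ray
   x = m + t v this is -t v H_s v^T, positive for t > 0 as long as the ray
   stays in the negative-definite island, so L increases strictly there.
   Since g_s is C^2 on the interior, negative definiteness is an open
   condition: a ball around m lies in the negative-definite region, hence in
   its component U, and every point of the ball is reached from m by a
   segment inside U, so m is a local minimum. *)

Section LocalEquality.
Variables (R : realType) (V W : normedModType R).

Lemma near0_differentiable (h : V -> W) x :
  (\forall z \near x, h z = 0) -> differentiable h x.
Proof.
move=> h0; have hx : h x = 0 := nbhs_singleton h0.
have hE : h \o shift x = cst (h x) + ('d (cst (0 : W)) x : V -> W) +o_ 0 id.
  rewrite diff_cst hx; apply/eqaddoP => e e0.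
  have : \forall z \near (0 : V), h (z + x) = 0.
    by rewrite (near_shift x); near=> z; rewrite /= sub0r subrK; near: z.
  apply: filterS => z /= hz.
  by rewrite !fctE /= hz addr0 subr0 normr0 mulr_ge0 // ltW.
have cst_cont : continuous ('d (cst (0 : W)) x : V -> W).
  exact: diff_continuous (differentiable_cst _ _).
have dhE : 'd h x = 'd (cst (0 : W)) x :> (V -> W) by apply: diff_unique.
by apply/diff_locallyP; rewrite dhE.
Unshelve. all: by end_near.
Qed.

Lemma near_eq_differentiable (f g : V -> W) x :
  (\forall z \near x, f z = g z) -> differentiable f x -> differentiable g x.
Proof.
move=> fg df; have -> : g = f + (g - f) by rewrite addrC subrK.
apply: differentiableD => //; apply: near0_differentiable.
by apply: filterS fg => z /= fgz; rewrite !fctE fgz subrr.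
Qed.

Lemma near_eq_continuous (f g : V -> W) x :
  (\forall z \near x, f z = g z) -> {for x, continuous f} -> {for x, continuous g}.
Proof.
move=> fg cf; rewrite /prop_for /continuous_at -(nbhs_singleton fg).
exact: cvg_trans (near_eq_cvg fg) cf.
Qed.

End LocalEquality.

Section C2.
Variables (R : realType) (V : normedModType R).
Implicit Types (O : set V) (F G : V -> R).

Definition C2_on O F := forall x, O x ->
  [/\ differentiable F x, forall v, differentiable ('D_v F) x &
      forall v w, {for x, continuous ('D_w ('D_v F))}].

Lemma C2_on_subset O O' F : O `<=` O' -> C2_on O' F -> C2_on O F.
Proof. by move=> OO' FO' x /OO' /FO'. Qed.

Lemma open_near_eq O F G x : open O -> O x ->
  (forall z, O z -> F z = G z) -> \forall z \near x, F z = G z.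
Proof. by move=> oO Ox FG; apply: filterS (open_nbhs_nbhs (conj oO Ox)) => z /FG. Qed.

Lemma C2_onP O F (DF : V -> V -> R) (D2F : V -> V -> V -> R) : open O ->
  (forall x, O x -> differentiable F x) ->
  (forall v x, O x -> 'D_v F x = DF v x) ->
  (forall v x, O x -> differentiable (DF v) x) ->
  (forall v w x, O x -> 'D_w (DF v) x = D2F v w x) ->
  (forall v w x, O x -> {for x, continuous (D2F v w)}) -> C2_on O F.
Proof.
move=> oO dF DFE dDF D2FE cD2F x Ox.
have DFnear v z : O z -> \forall y \near z, DF v y = 'D_v F y.
  by move=> Oz; apply: (open_near_eq oO Oz) => y Oy; rewrite DFE.
split=> [|v|v w]; first exact: dF.
  exact: near_eq_differentiable (DFnear v x Ox) (dDF v x Ox).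
apply: (near_eq_continuous _ (cD2F v w x Ox)).
apply: (open_near_eq oO Ox) => z Oz.
by rewrite -D2FE // (near_eq_derive _ (DFnear v z Oz)).
Qed.

Lemma C2_on_cst O (c : R) : open O -> C2_on O (cst c).
Proof.
move=> oO; apply: (@C2_onP _ _ (fun=> cst 0) (fun _ _ => cst 0)) => // *;
  by [exact: differentiable_cst|rewrite derive_cst|exact: cst_continuous].
Qed.

Lemma C2_onD O F G : open O -> C2_on O F -> C2_on O G -> C2_on O (F + G).
Proof.
move=> oO cF cG.
apply: (@C2_onP _ _ (fun v => 'D_v F + 'D_v G)
  (fun v w => 'D_w ('D_v F) + 'D_w ('D_v G))) => //.
- move=> x Ox; have [dF _ _] := cF x Ox; have [dG _ _] := cG x Ox.
  exact: differentiableD.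
- move=> v x Ox; have [dF _ _] := cF x Ox; have [dG _ _] := cG x Ox.
  by rewrite deriveD; [|exact: diff_derivable..].
- move=> v x Ox; have [_ dF _] := cF x Ox; have [_ dG _] := cG x Ox.
  exact: differentiableD.
- move=> v w x Ox; have [_ dF _] := cF x Ox; have [_ dG _] := cG x Ox.
  by rewrite deriveD; [|exact: diff_derivable..].
- move=> v w x Ox; have [_ _ cF2] := cF x Ox; have [_ _ cG2] := cG x Ox.
  exact: continuousD.
Qed.

Lemma C2_onZ O (c : R) F : open O -> C2_on O F -> C2_on O (c \*o F).
Proof.
move=> oO cF.
apply: (@C2_onP _ _ (fun v => c \*o 'D_v F) (fun v w => c \*o 'D_w ('D_v F))) => //.
- by move=> x Ox; have [dF _ _] := cF x Ox; exact: differentiableZ.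
- move=> v x Ox; have [dF _ _] := cF x Ox.
  by rewrite deriveMl //; exact: diff_derivable.
- by move=> v x Ox; have [_ dF _] := cF x Ox; exact: differentiableZ.
- move=> v w x Ox; have [_ dF _] := cF x Ox.
  by rewrite deriveMl //; exact: diff_derivable.
- move=> v w x Ox; have [_ _ cF2] := cF x Ox.
  by apply: continuousZ; [exact: cst_continuous|].
Qed.

Lemma C2_on_sum O (I : Type) (s : seq I) (F : I -> V -> R) :
  open O -> (forall i, C2_on O (F i)) -> C2_on O (\sum_(i <- s) F i).
Proof.
move=> oO cF; elim: s => [|i s IH].
  have -> : \sum_(i <- [::]) F i = cst 0 by apply/funext => z; rewrite big_nil.
  exact: (C2_on_cst 0 oO).
rewrite big_cons; exact: (C2_onD oO (cF i) IH).
Qed.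

End C2.

Section AffineComposition.
Variables (R : realType) (n : nat).
Notation V := 'rV[R]_n.

Definition aff (a : 'I_n -> R) (b : R) (z : V) : R := \sum_k a k * z 0 k + b.

Lemma derive_coord (x v : V) k : 'D_v (fun z : V => z 0 k) x = v 0 k.
Proof.
rewrite deriveE; last exact: differentiable_coord.
have @f : {linear V -> R}.
  by exists (fun z : V => z 0 k); do 2![eexists]; do ?[constructor];
     rewrite ?mxE// => ? *; rewrite ?mxE//; move=> ?; rewrite !mxE.
rewrite (_ : (fun _ => _) = f) // diff_lin //; exact: coord_continuous.
Qed.

Lemma affE a b : aff a b = \sum_k (a k \*o (fun z : V => z 0 k)) + cst b.
Proof. by apply/funext => z; rewrite /aff !fctE fct_sumE. Qed.

Lemma aff_differentiable a b x : differentiable (aff a b) x.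
Proof.
rewrite affE; apply: differentiableD; last exact: differentiable_cst.
by apply: differentiable_sum => k; apply: differentiableZ; exact: differentiable_coord.
Qed.

Lemma derive_aff a b x v : 'D_v (aff a b) x = aff a 0 v.
Proof.
have dk k : derivable (a k \*o (fun z : V => z 0 k)) x v.
  by apply: diff_derivable; apply: differentiableZ; exact: differentiable_coord.
rewrite affE deriveD; [|exact: derivable_sum|exact: derivable_cst].
rewrite derive_cst derive_sum // /aff !addr0; apply: eq_bigr => k _.
rewrite deriveMl ?derive_coord //.
by apply: diff_derivable; exact: differentiable_coord.
Qed.

Lemma derive_comp_aff (phi : R -> R) a b x v d : is_derive (aff a b x) 1 phi d ->
  'D_v (phi \o aff a b) x = aff a 0 v * d.
Proof.
move=> phid; have dphi : differentiable phi (aff a b x).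
  by apply/derivable1_diffP; exact: ex_derive.
rewrite deriveE; last exact: differentiable_comp (aff_differentiable a b x) dphi.
rewrite (diff_comp (aff_differentiable a b x) dphi) /= diff1E // -deriveE;
  last exact: aff_differentiable.
by rewrite derive_aff derive1E derive_val.
Qed.

Lemma C2_on_comp_aff (D : set R) (phi phi' phi'' : R -> R) a b : open D ->
  (forall t, D t -> is_derive t 1 phi (phi' t)) ->
  (forall t, D t -> is_derive t 1 phi' (phi'' t)) ->
  (forall t, D t -> {for t, continuous phi''}) ->
  C2_on (aff a b @^-1` D) (phi \o aff a b).
Proof.
move=> oD phi1 phi2 phi3.
have aff_cont x : {for x, continuous (aff a b)}.
  exact: differentiable_continuous (aff_differentiable a b x).
have oO : open (aff a b @^-1` D) by apply: open_comp oD => x _; exact: aff_cont.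
have comp_diff (f : R -> R) f' x : is_derive (aff a b x) 1 f f' ->
    differentiable (f \o aff a b) x.
  move=> fd; apply: differentiable_comp; first exact: aff_differentiable.
  by apply/derivable1_diffP; exact: ex_derive.
apply: (@C2_onP _ _ _ _ (fun v => aff a 0 v \*o (phi' \o aff a b))
  (fun v w => (aff a 0 v * aff a 0 w) \*o (phi'' \o aff a b))) => //.
- by move=> x Dx; exact: comp_diff (phi1 _ Dx).
- by move=> v x Dx; exact: derive_comp_aff (phi1 _ Dx).
- by move=> v x Dx; apply: differentiableZ; exact: comp_diff (phi2 _ Dx).
- move=> v w x Dx; rewrite deriveMl; last first.
    by apply: diff_derivable; exact: comp_diff (phi2 _ Dx).
  by rewrite (derive_comp_aff w (phi2 _ Dx)) mulrA.
- move=> v w x Dx; apply: continuousZ; first exact: cst_continuous.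
  exact: continuous_comp (aff_cont x) (phi3 _ Dx).
Qed.

End AffineComposition.

Section EntropyDerivatives.
Variable R : realType.

Lemma is_derive_xlnx (t : R) : 0 < t ->
  is_derive t 1 (fun u : R => u * ln u) (ln t + 1).
Proof.
move=> t0; have := is_deriveM (is_derive_id t 1) (is_derive1_ln t0).
by rewrite [t *: _]mulfV ?gt_eqF // [(ln t)%:A]mulr1 addrC.
Qed.

Lemma is_derive_ln_add1 (t : R) : 0 < t ->
  is_derive t 1 (fun u : R => ln u + 1) t^-1.
Proof.
move=> t0; have := is_deriveD (is_derive1_ln t0) (is_derive_cst (1 : R) t 1).
by rewrite addr0.
Qed.

End EntropyDerivatives.

Section GuilleminPotential.
Variables (R : realType) (n r : nat).
Variables (nu : 'I_r -> 'I_n -> int) (lam : 'I_r -> R).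

Lemma ell_shift j (x : 'rV[R]_n) (t : R) :
  ell nu lam j (x - t *: \row_k (nu j k)%:~R) =
  ell nu lam j x - t * \sum_k ((nu j k)%:~R) ^+ 2.
Proof.
rewrite /ell addrAC; congr (_ + _); rewrite big_distrr -sumrB.
by apply: eq_bigr => k _; rewrite !mxE mulrBr expr2 mulrCA.
Qed.

(* A small step from x against the normal nu_j stays in the polytope and
   strictly decreases ell_j. *)
Lemma ell_gt0_interior j (x : 'rV[R]_n) : interior (polytope nu lam) x ->
  (exists k, nu j k != 0) -> 0 < ell nu lam j x.
Proof.
move=> /nbhs_ballP [e /= e0 eP] [k0 nk0].
set a : 'rV[R]_n := \row_k (nu j k)%:~R.
set t : R := e / (2 * (`|a| + 1)).
have t0 : 0 < t by rewrite divr_gt0 // mulr_gt0 // ltr_wpDl.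
have /(_ j) : polytope nu lam (x - t *: a).
  apply: eP; rewrite -ball_normE /= opprB addrC subrK normrZ gtr0_norm //.
  rewrite /t mulrAC ltr_pdivrMr ?mulr_gt0 ?ltr_wpDl //.
  by have := normr_ge0 a; nra.
rewrite ell_shift subr_ge0; apply: lt_le_trans; apply: mulr_gt0 => //.
rewrite (bigD1 k0) //=; apply: ltr_pwDl; first by rewrite exprn_even_gt0 // intr_eq0.
by apply: sumr_ge0 => k _; exact: sqr_ge0.
Qed.

Lemma C2_on_ell_xlnx j : C2_on (interior (polytope nu lam))
  (fun z => ell nu lam j z * ln (ell nu lam j z)).
Proof.
have [[k0 nk0]|nu_j0] := pselect (exists k, nu j k != 0).
  apply: (@C2_on_subset _ _ _
    (aff (fun k => (nu j k)%:~R) (lam j) @^-1` [set t | 0 < t])).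
    by move=> z Oz; exact: ell_gt0_interior Oz (ex_intro _ k0 nk0).
  apply: C2_on_comp_aff (@is_derive_xlnx R) (@is_derive_ln_add1 R) _ => [|t t0].
    exact: open_gt.
  by apply: inv_continuous; rewrite gt_eqF.
have ellE z : ell nu lam j z = lam j.
  rewrite /ell big1 ?add0r // => k _.
  have [->|nz] := eqVneq (nu j k) 0; first by rewrite mul0r.
  by case: nu_j0; exists k.
have -> : (fun z => ell nu lam j z * ln (ell nu lam j z)) = cst (lam j * ln (lam j)).
  by apply/funext => z; rewrite ellE.
exact: (C2_on_cst _ (@open_interior _ _)).
Qed.

Lemma C2_on_gP : C2_on (interior (polytope nu lam)) (gP nu lam).
Proof.
have oO := @open_interior _ (polytope nu lam).
have -> : gP nu lam = 2^-1 \*o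
    \sum_j (fun z => ell nu lam j z * ln (ell nu lam j z)).
  by apply/funext => z; rewrite /gP /= fct_sumE.
by apply: C2_onZ => //; apply: C2_on_sum => // j; exact: C2_on_ell_xlnx.
Qed.

End GuilleminPotential.

Section LogNorm.
Variables (R : realType) (n : nat).
Notation V := 'rV[R]_n.
Implicit Types (g : V -> R) (p x v : V).

Definition log_norm g p x : R := dotp (p - x) (grad g x) + g x.

Lemma mulmx_trE (H : 'M[R]_n) (u w : V) :
  (u *m H *m w^T) 0 0 = \sum_k w 0 k * \sum_i u 0 i * H i k.
Proof.
by rewrite !mxE; apply: eq_bigr => k _; rewrite !mxE mulrC.
Qed.

Lemma derive_coordinates (F : V -> R) x v : differentiable F x ->
  'D_v F x = \sum_k v 0 k * 'D_(ebasis R k) F x.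
Proof.
move=> dF; rewrite deriveE // {1}(row_sum_delta v) linear_sum.
by apply: eq_bigr => k _; rewrite linearZ /= deriveE.
Qed.

Lemma log_normE g p : log_norm g p =
  \sum_k ((cst (p 0 k) - (fun z : V => z 0 k)) * 'D_(ebasis R k) g) + g.
Proof.
apply/funext => z; rewrite /log_norm /dotp !fctE fct_sumE.
by congr (_ + _); apply: eq_bigr => k _; rewrite !mxE.
Qed.

Section RegularPotential.
Variables (O : set V) (g : V -> R).
Hypothesis g_C2 : C2_on O g.

Let coord_diff k p x :
  differentiable (cst (p 0 k) - (fun z : V => z 0 k)) x.
Proof.
by apply: differentiableB; [exact: differentiable_cst|exact: differentiable_coord].
Qed.

Let term_diff k p x : O x ->
  differentiable ((cst (p 0 k) - (fun z : V => z 0 k)) * 'D_(ebasis R k) g) x.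
Proof.
by case/g_C2 => _ dDg _; apply: differentiableM; [exact: coord_diff|exact: dDg].
Qed.

Lemma log_norm_differentiable p x : O x -> differentiable (log_norm g p) x.
Proof.
move=> Ox; have [dg _ _] := g_C2 Ox; rewrite log_normE.
by apply: differentiableD => //; apply: differentiable_sum => k; exact: term_diff.
Qed.

(* The first-order terms cancel: only the Hessian survives. *)
Lemma derive_log_norm p x v : O x ->
  'D_v (log_norm g p) x = (v *m hessian g x *m (p - x)^T) 0 0.
Proof.
move=> Ox; have [dg dDg _] := g_C2 Ox.
rewrite log_normE deriveD; first last.
- exact: diff_derivable.
- by apply/derivable_sum => k; apply: diff_derivable; exact: term_diff.
rewrite derive_sum => [|k]; last by apply: diff_derivable; exact: term_diff.
rewrite (derive_coordinates v dg) -big_split mulmx_trE; apply: eq_bigr => k _ /=.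
rewrite deriveM;
  [|exact: diff_derivable (coord_diff _ _ _)|exact: diff_derivable (dDg _)].
rewrite deriveB;
  [|exact: derivable_cst|exact: diff_derivable (differentiable_coord _ _ _)].
rewrite derive_cst derive_coord (derive_coordinates v (dDg _)) !mxE.
have -> : \sum_i v 0 i * 'D_(ebasis R i) ('D_(ebasis R k) g) x =
          \sum_i v 0 i * hessian g x i k by apply: eq_bigr => i _; rewrite mxE.
by rewrite /GRing.scale /= sub0r !fctE mulrN [_ * v 0 k]mulrC subrK.
Qed.

End RegularPotential.
End LogNorm.

Section Rays.
Variables (R : realType) (n : nat).
Notation V := 'rV[R]_n.

Let line_quotientE (F : V -> R) p v t :
  (fun h : R => h^-1 *: (((fun s : R => F (p + s *: v)) \o shift t) (h *: 1)
       - (fun s : R => F (p + s *: v)) t)) =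
  (fun h : R => h^-1 *: ((F \o shift (p + t *: v)) (h *: v) - F (p + t *: v))).
Proof.
apply/funext => h /=; congr (_ *: (F _ - _)).
by rewrite [h *: 1]mulr1 scalerDl addrCA addrC.
Qed.

Lemma derive1_line (F : V -> R) p v t :
  derive1 (fun s : R => F (p + s *: v)) t = 'D_v F (p + t *: v).
Proof. by rewrite derive1E /derive line_quotientE. Qed.

Lemma derivable_line (F : V -> R) p v t :
  derivable F (p + t *: v) v -> derivable (fun s : R => F (p + s *: v)) t 1.
Proof. by rewrite /derivable line_quotientE. Qed.

(* Along the ray x = p + t v the derivative of the log-norm is -t v H v^T. *)
Lemma log_norm_ray_lt (O : set V) g p v t1 t2 : C2_on O g ->
  v != 0 -> 0 <= t1 -> t1 < t2 ->
  (forall t, t1 <= t <= t2 -> O (p + t *: v) /\ negdef (hessian g (p + t *: v))) ->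
  log_norm g p (p + t1 *: v) < log_norm g p (p + t2 *: v).
Proof.
move=> g_C2 v0 t10 t12 negray.
have Ot t : t1 <= t <= t2 -> O (p + t *: v) by case/negray.
have dphi t : t1 <= t <= t2 ->
    derivable (fun s : R => log_norm g p (p + s *: v)) t 1.
  move=> /Ot Ox; apply: derivable_line; apply: diff_derivable.
  exact: (log_norm_differentiable g_C2).
have itv_cc t : t \in `]t1, t2[ -> t1 <= t <= t2.
  by rewrite in_itv /= => /andP[? ?]; apply/andP; split; apply: ltW.
apply: (@gtr0_derive1_lt_cc _ (fun s : R => log_norm g p (p + s *: v)) t1 t2) => //.
- by move=> t /itv_cc; exact: dphi.
- move=> t tt; have [Ox Nx] := negray t (itv_cc t tt).
  rewrite derive1_line (derive_log_norm g_C2 p v Ox).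
  have -> : p - (p + t *: v) = - t *: v by rewrite opprD addNKr scaleNr.
  rewrite linearZ /= -scalemxAr mxE mulNr oppr_gt0.
  move: tt; rewrite in_itv /= => /andP[tt1 _].
  by rewrite pmulr_rlt0 ?(le_lt_trans t10 tt1) //; exact: Nx.
- apply: derivable_within_continuous => t; rewrite in_itv /=; exact: dphi.
- by rewrite in_itv /= lexx (ltW t12).
- by rewrite in_itv /= lexx (ltW t12).
Qed.

Lemma log_norm_segment_le (O : set V) g p x : C2_on O g ->
  (forall t, 0 <= t <= 1 ->
     O (p + t *: (x - p)) /\ negdef (hessian g (p + t *: (x - p)))) ->
  log_norm g p p <= log_norm g p x.
Proof.
move=> g_C2 negseg; have [->|xp] := eqVneq x p; first exact: lexx.
have xp0 : x - p != 0 by rewrite subr_eq0.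
have := log_norm_ray_lt g_C2 xp0 (lexx 0) ltr01 negseg.
by rewrite scale0r addr0 scale1r [p + _]addrC subrK => /ltW.
Qed.

End Rays.

Section NegativeDefinite.
Variables (R : realType) (n : nat).
Notation V := 'rV[R]_n.
Implicit Types (M : 'M[R]_n) (v : V).

Definition qform M v : R := (v *m M *m v^T) 0 0.

Lemma coord_le_norm v i : `|v 0 i| <= `|v|.
Proof.
change (`|v 0 i| <= mx_norm v); rewrite mx_normrE.
by rewrite (bigD1 (0, i)) //= le_max lexx.
Qed.

Lemma qformZ M (a : R) v : qform M (a *: v) = a ^+ 2 * qform M v.
Proof. by rewrite /qform linearZ /= -!scalemxAl -scalemxAr !mxE mulrA -expr2. Qed.

Lemma qform_continuous M : continuous (qform M).
Proof.
move=> v; apply: differentiable_continuous.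
have -> : qform M = \sum_k ((fun w : V => w 0 k) *
    \sum_i ((fun w : V => w 0 i) * cst (M i k))).
  apply/funext => w; rewrite /qform mulmx_trE !fct_sumE.
  by apply: eq_bigr => k _; rewrite fctE fct_sumE.
apply: differentiable_sum => k;
  apply: differentiableM; first exact: differentiable_coord.
apply: differentiable_sum => i;
  apply: differentiableM; [exact: differentiable_coord|exact: differentiable_cst].
Qed.

(* The minimum of the quadratic form on the (compact) unit sphere gives d. *)
Lemma negdef_qform_le M : negdef M ->
  exists2 d : R, 0 < d & forall v, qform M v <= - d * `|v| ^+ 2.
Proof.
move=> Mneg; set S := [set v : V | `|v| = 1].
have normalizeS v : v != 0 -> S (`|v|^-1 *: v).
  by move=> v0; rewrite /S /= normrZ normfV normr_id mulVf // normr_eq0.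
have [[c Sc]|S0] := pselect (S !=set0); last first.
  exists 1 => // v; have [->|v0] := eqVneq v 0.
    by rewrite /qform mul0mx mul0mx mxE normr0 expr0n /= mulr0.
  by case: S0; exists (`|v|^-1 *: v); exact: normalizeS.
have cS : compact S.
  apply: bounded_closed_compact.
    rewrite /= /bounded_near; near=> K => v /= ->; near: K.
    by apply: nbhs_pinfty_ge; rewrite num_real.
  have -> : S = (fun v : V => `|v|) @^-1` [set 1] by [].
  by apply: closed_comp => [v _|]; [exact: norm_continuous|exact: closed_eq].
have [c' Sc' c'max] := EVT_max_rV (ex_intro _ c Sc) cS
  (continuous_subspaceT (@qform_continuous M)).
move: Sc'; rewrite inE => Sc'.
have c'0 : c' != 0.
  by apply/eqP => c'0; move: Sc'; rewrite c'0 normr0 => /esym/eqP; rewrite oner_eq0.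
exists (- qform M c'); first by rewrite oppr_gt0; exact: Mneg.
move=> v; have [->|v0] := eqVneq v 0.
  by rewrite /qform mul0mx mul0mx mxE normr0 expr0n /= mulr0.
have vE : v = `|v| *: (`|v|^-1 *: v) by rewrite scalerA mulfV ?normr_eq0 // scale1r.
rewrite {1}vE qformZ opprK mulrC ler_pM2r ?exprn_gt0 ?normr_gt0 //.
by apply: c'max; rewrite inE; exact: normalizeS.
Unshelve. all: by end_near.
Qed.

Lemma qform_perturb M M' (e : R) v : (forall i k, `|M' i k - M i k| <= e) ->
  `|qform M' v - qform M v| <= n%:R ^+ 2 * e * `|v| ^+ 2.
Proof.
move=> Me; have entryB (A B : 'M[R]_1) : (A - B) 0 0 = A 0 0 - B 0 0 by rewrite !mxE.
rewrite /qform -entryB -mulmxBl -mulmxBr mulmx_trE.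
have -> : n%:R ^+ 2 * e * `|v| ^+ 2 = \sum_(k < n) (`|v| * \sum_(i < n) (`|v| * e)).
  have sum_const (X : R) : \sum_(k < n) X = n%:R * X.
    by rewrite sumr_const card_ord mulr_natl.
  by rewrite !sum_const; ring.
apply: (le_trans (ler_norm_sum _ _ _)); apply: ler_sum => k _.
rewrite normrM; apply: ler_pM => //; first exact: coord_le_norm.
apply: (le_trans (ler_norm_sum _ _ _)); apply: ler_sum => i _.
rewrite normrM; apply: ler_pM => //; first exact: coord_le_norm.
by rewrite !mxE.
Qed.

Lemma negdef_near (H : V -> 'M[R]_n) x :
  (forall i k, {for x, continuous (fun z => H z i k)}) -> negdef (H x) ->
  \forall z \near x, negdef (H z).
Proof.
move=> Hcont /negdef_qform_le [d d0 Hxd].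
set e := d / (2 * (n%:R ^+ 2 + 1)).
have e0 : 0 < e by rewrite divr_gt0 // mulr_gt0 // ltr_pwDr.
have ne_le : n%:R ^+ 2 * e <= d / 2.
  have N1e : (n%:R ^+ 2 + 1) * e = d / 2.
    have N10 : n%:R ^+ 2 + 1 != 0 :> R by rewrite lt0r_neq0 // ltr_pwDr.
    by rewrite /e; field.
  by rewrite -N1e ler_pM2r // lerDl.
have near_entries : \forall z \near x, forall i k, `|H z i k - H x i k| <= e.
  have nF : Filter (nbhs x) by apply: nbhs_filter.
  apply: (@filter_forall _ _ (fun i z => forall k, `|H z i k - H x i k| <= e) _ nF)
    => i.
  apply: (@filter_forall _ _ (fun k z => `|H z i k - H x i k| <= e) _ nF) => k.
  have := (cvgrPdist_le (fun z => H z i k) (H x i k)).1 (Hcont i k) e e0.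
  by move=> xnear; near=> z; rewrite distrC; near: z; exact: xnear.
near=> z => v v0; change (qform (H z) v < 0).
have Hz : `|qform (H z) v - qform (H x) v| <= n%:R ^+ 2 * e * `|v| ^+ 2.
  by apply: qform_perturb; near: z.
have : n%:R ^+ 2 * e * `|v| ^+ 2 <= d / 2 * `|v| ^+ 2.
  by rewrite ler_pM2r // exprn_gt0 // normr_gt0.
have := ler_norm (qform (H z) v - qform (H x) v); have := Hxd v.
have : 0 < d * `|v| ^+ 2 by rewrite mulr_gt0 // exprn_gt0 // normr_gt0.
by rewrite mulrAC; lra.
Unshelve. all: by end_near.
Qed.

End NegativeDefinite.

Section SegmentsInComponents.
Variables (R : realType) (V : normedModType R).

(* A ball around p inside A is connected, hence lies in the component of p. *)
Lemma connected_component_segment_near (A : set V) x0 p :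
  connected_component A x0 p -> (\forall z \near p, A z) ->
  \forall x \near p, forall t, 0 <= t <= 1 ->
    connected_component A x0 (p + t *: (x - p)).
Proof.
move=> Cp /nbhs_ballP [e e0 eA]; apply/nbhs_ballP; exists e => // x px t t01.
rewrite (same_connected_component Cp).
pose S := (fun u : R => p + u *: (x - p)) @` `[0, 1].
apply: (@connected_component_max _ _ S).
- by exists 0; [rewrite /= in_itv /= lexx ler01|rewrite scale0r addr0].
- move=> y [u]; rewrite /= in_itv /= => /andP[u0 u1] <-; apply: eA.
  rewrite -ball_normE /= opprD addrA subrr sub0r normrN normrZ ger0_norm //.
  move: px; rewrite -ball_normE /= distrC => px.
  by have := normr_ge0 (x - p); nra.
- apply: connected_continuous_connected; first exact: segment_connected.
  apply: continuous_subspaceT => u; apply: cvgD; first exact: cvg_cst.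
  exact: scalel_continuous.
- by exists t => //; rewrite /= in_itv /=.
Qed.

End SegmentsInComponents.

Lemma smooth_C2_on (R : realType) n (O : set 'rV[R]_n) psi : smooth psi -> C2_on O psi.
Proof.
move=> psi_smooth x _; split=> [|v|v w]; first exact: (psi_smooth [::] x).
  exact: (psi_smooth [:: v] x).
by apply: differentiable_continuous; exact: (psi_smooth [:: w; v] x).
Qed.

Lemma C2_on_gs (R : realType) n r nu lam (psi : 'rV[R]_n -> R) s : smooth psi ->
  C2_on (interior (polytope nu lam)) (@gs R n r nu lam psi s).
Proof.
move=> psi_smooth; have oO := @open_interior _ (polytope nu lam).
exact: C2_onD oO (@C2_on_gP _ _ _ nu lam) (C2_onZ s oO (smooth_C2_on psi_smooth)).
Qed.

Lemma hessian_continuous (R : realType) n (O : set 'rV[R]_n) g x :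
  C2_on O g -> O x -> forall i k, {for x, continuous (fun z => hessian g z i k)}.
Proof.
move=> g_C2 Ox i k; have [_ _ cD2g] := g_C2 x Ox.
rewrite (_ : (fun z => _) = 'D_(ebasis R i) ('D_(ebasis R k) g)) //.
by apply/funext => z; rewrite mxE.
Qed.

Theorem mainTheorem12 (R : realType) (n r : nat)
  (nu : 'I_r -> 'I_n -> int) (lam : 'I_r -> R) (psi : 'rV[R]_n -> R)
  (s : R) (m : 'I_n -> int) (U : set 'rV[R]_n) :
  delzant nu lam ->
  smooth psi ->
  (forall x, polytope nu lam x -> posdef (hessian psi x)) ->
  (exists sneg, is_sneg nu lam psi sneg /\ s < - sneg) ->
  polytope nu lam (intpt R m) ->
  island nu lam psi s U ->
  U (intpt R m) ->
  (* m is a local minimum of the norm, and a minimum over all x visible from m in U *)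
  (\forall x \near intpt R m,
      sigma_norm nu lam psi s m (intpt R m) <= sigma_norm nu lam psi s m x) /\
  (forall x : 'rV[R]_n,
      (forall t : R, 0 <= t <= 1 -> U (intpt R m + t *: (x - intpt R m))) ->
      sigma_norm nu lam psi s m (intpt R m) <= sigma_norm nu lam psi s m x) /\
  (* strictly increasing along each ray from m as long as the ray stays in U *)
  (forall (v : 'rV[R]_n) (t1 t2 : R), v != 0 -> 0 <= t1 -> t1 < t2 ->
      (forall t, 0 <= t <= t2 -> U (intpt R m + t *: v)) ->
      sigma_norm nu lam psi s m (intpt R m + t1 *: v)
        < sigma_norm nu lam psi s m (intpt R m + t2 *: v)).
Proof.
move=> _ psi_smooth _ _ _ [x0 [_ ->]] Up.
set p := intpt R m; set A := negdef_region nu lam psi s.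
have g_C2 := @C2_on_gs _ _ _ nu lam psi s psi_smooth.
have inA y : connected_component A x0 y ->
    interior (polytope nu lam) y /\ negdef (hessian (gs nu lam psi s) y).
  exact: connected_component_sub.
have seg_le x :
    (forall t, 0 <= t <= 1 -> connected_component A x0 (p + t *: (x - p))) ->
    sigma_norm nu lam psi s m p <= sigma_norm nu lam psi s m x.
  move=> Useg; rewrite /sigma_norm ler_expR.
  by apply: (log_norm_segment_le g_C2) => t /Useg /inA.
split; [|split; [exact: seg_le|move=> v t1 t2 v0 t10 t12 Uray]].
- have [Op Np] := inA _ Up.
  have Anear : \forall z \near p, A z.
    apply: filterS2 (open_nbhs_nbhs (conj (@open_interior _ _) Op))
      (negdef_near (hessian_continuous g_C2 Op) Np) => z.
    by split.
  by apply: filterS (connected_component_segment_near Up Anear) => x; exact: seg_le.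
- rewrite /sigma_norm ltr_expR.
  apply: (log_norm_ray_lt g_C2 v0 t10 t12) => t /andP[t1t tt2].
  by apply/inA/Uray; rewrite tt2 (le_trans t10 t1t).
Qed.
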